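(* Let $\{p_{(R,\alpha)}(\mathbf{x})\}_{(R,\alpha)}$ be a replacement rule satisfying the Fixation Axiom and Assumptions 1, 3 and 4. Then for every state $\mathbf{x}\in\{0,1\}^G$, $$\hat\Delta_{\mathrm{sel}}(\mathbf{x})=\sum_{i\in I}X_i\big(W_i(\mathbf{x})-V_i\big).$$
   Context: $G$ is a finite nonempty set of genetic sites, $n=|G|$, partitioned into sets $G_i$ ($i\in I$, the individuals), $n_i=|G_i|$; $g\sim h$ means $g,h\in G_i$ for some $i$. A state is $\mathbf{x}\in\{0,1\}^G$; $\mathbf{a}$ is the all-zero and $\mathbf{A}$ the all-one state. A replacement event is $(R,\alpha)$ with $R\subseteq G$, $\alpha:R\to G$; a replacement rule gives for each state a probability distribution $\{p_{(R,\alpha)}(\mathbf{x})\}$ over events. Fixation Axiom: there exist $g\in G$, $m\ge1$, events $(R_k,\alpha_k)_{k=1}^m$ with $p_{(R_k,\alpha_k)}(\mathbf{x})>0$ for all $k,\mathbf{x}$, $g\in R_k$ for some $k$, and $\tilde\alpha_1\circ\cdots\circ\tilde\alpha_m(h)=g$ for all $h$, where $\tilde\alpha_k$ equals $\alpha_k$ on $R_k$ and the identity elsewhere. $e_{gh}(\mathbf{x})=\sum_{(R,\alpha):h\in R,\alpha(h)=g}p_{(R,\alpha)}(\mathbf{x})$, $d_g(\mathbf{x})=\sum_he_{hg}(\mathbf{x})$. Assumption 1: $p_{(R,\alpha)}(\mathbf{A})=p_{(R,\alpha)}(\mathbf{a})$ for all events; $e^\circ_{gh},d^\circ_g$ denote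 values in these states. Reproductive values: the unique $(v_g)$ with $d^\circ_gv_g=\sum_he^\circ_{gh}v_h$ for all $g$ and $\sum_gv_g=n$. $\hat b_g(\mathbf{x})=\sum_he_{gh}(\mathbf{x})v_h$, $\hat d_g(\mathbf{x})=v_gd_g(\mathbf{x})$, fitness $w_g(\mathbf{x})=v_g-\hat d_g(\mathbf{x})+\hat b_g(\mathbf{x})$, $\hat\Delta_{\mathrm{sel}}(\mathbf{x})=\sum_gx_g(\hat b_g(\mathbf{x})-\hat d_g(\mathbf{x}))$. Individual quantities: $X_i=\frac1{n_i}\sum_{g\in G_i}x_g$, $V_i=\sum_{g\in G_i}v_g$, $W_i(\mathbf{x})=\sum_{g\in G_i}w_g(\mathbf{x})$. Assumption 3 (coherence of individuals): if $g\sim h$, then for each state $\mathbf{x}$ and each event $(R,\alpha)$ with $p_{(R,\alpha)}(\mathbf{x})>0$, either $g,h\in R$ or $g,h\notin R$. Assumption 4 (fair meiosis): if $(R,\alpha_1)$, $(R,\alpha_2)$ are events with the same $R$ and $\alpha_1(g)\sim\alpha_2(g)$ for all $g\in R$, then $p_{(R,\alpha_1)}(\mathbf{x})=p_{(R,\alpha_2)}(\mathbf{x})$ for every state $\mathbf{x}$. *)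

From HB Require Import structures.
From mathcomp Require Import all_boot all_order all_algebra.
Set Implicit Arguments. Unset Strict Implicit. Unset Printing Implicit Defensive.
Import Order.TTheory GRing.Theory Num.Theory.
Local Open Scope ring_scope.

Section Defs.
Variables (R : realFieldType) (G I : finType).

Definition state := {ffun G -> bool}.

(* A replacement event (R, alpha) with R a subset of G and alpha : R -> G is
   encoded bijectively as a finite function a : G -> option G, where
   R = {g | a g <> None} and alpha g = y iff a g = Some y. *)
Definition event := {ffun G -> option G}.

Definition in_R (e : event) (g : G) : bool := e g != None.

Definition rule := state -> event -> R.

Definition is_replacement_rule (p : rule) : Prop :=
  (forall x e, 0 <= p x e) /\ (forall x, \sum_(e : event) p x e = 1).

Definition ext_map (e : event) (h : G) : G := odflt h (e h).

Definition comp_events (s : seq event) : G -> G :=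
  foldr (fun e f => ext_map e \o f) id s.

Definition fixation_axiom (p : rule) : Prop :=
  exists (g : G) (s : seq event),
    [/\ (1 <= size s)%N,
        (forall e, e \in s -> forall x, 0 < p x e),
        (exists2 e, e \in s & in_R e g) &
        (forall h, comp_events s h = g)].

(* e_{gh}(x): probability that h is replaced by offspring of g *)
Definition e_rate (p : rule) (x : state) (g h : G) : R :=
  \sum_(e : event | e h == Some g) p x e.

Definition d_rate (p : rule) (x : state) (g : G) : R :=
  \sum_(h : G) e_rate p x h g.

Definition stateA : state := [ffun=> true].
Definition statea : state := [ffun=> false].

Definition assumption1 (p : rule) : Prop :=
  forall e, p stateA e = p statea e.

Definition e0 (p : rule) (g h : G) : R := e_rate p statea g h.
Definition d0 (p : rule) (g : G) : R := d_rate p statea g.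

Definition reproductive_values (p : rule) (v : G -> R) : Prop :=
  (forall g, d0 p g * v g = \sum_(h : G) e0 p g h * v h) /\
  \sum_(g : G) v g = #|G|%:R.

Definition bhat (p : rule) (v : G -> R) (x : state) (g : G) : R :=
  \sum_(h : G) e_rate p x g h * v h.
Definition dhat (p : rule) (v : G -> R) (x : state) (g : G) : R :=
  v g * d_rate p x g.
Definition fitness (p : rule) (v : G -> R) (x : state) (g : G) : R :=
  v g - dhat p v x g + bhat p v x g.
Definition Delta_sel (p : rule) (v : G -> R) (x : state) : R :=
  \sum_(g : G) (x g)%:R * (bhat p v x g - dhat p v x g).

Definition Gi (ind : G -> I) (i : I) : {set G} := [set g | ind g == i].
Definition Xi (ind : G -> I) (x : state) (i : I) : R :=
  (#|Gi ind i|%:R)^-1 * \sum_(g in Gi ind i) (x g)%:R.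
Definition Vi (ind : G -> I) (v : G -> R) (i : I) : R :=
  \sum_(g in Gi ind i) v g.
Definition Wi (ind : G -> I) (p : rule) (v : G -> R) (x : state) (i : I) : R :=
  \sum_(g in Gi ind i) fitness p v x g.

Definition assumption3 (ind : G -> I) (p : rule) : Prop :=
  forall g h, ind g = ind h ->
  forall (x : state) (e : event), 0 < p x e -> in_R e g = in_R e h.

Definition same_R_sim (ind : G -> I) (e1 e2 : event) : bool :=
  [forall g, match e1 g, e2 g with
             | Some a, Some b => ind a == ind b
             | None, None => true
             | _, _ => false end].

Definition assumption4 (ind : G -> I) (p : rule) : Prop :=
  forall e1 e2 : event, same_R_sim ind e1 e2 -> forall x, p x e1 = p x e2.

End Defs.

From HB Require Import structures.
From mathcomp Require Import all_boot all_order all_algebra perm.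
Import Order.TTheory GRing.Theory Num.Theory.
Local Open Scope ring_scope.

(* Fair meiosis makes e_{gh}(x) depend on the parent g only through its
   individual: exchanging the parent g of h with a sibling g' is a bijection on
   events that preserves probabilities.  Coherence makes d_g(x) constant on
   individuals, and the Fixation Axiom makes it positive, so the defining
   equation d_g v_g = \sum_h e_{gh} v_h forces the reproductive values to be
   constant on individuals as well.  Hence b_g - d_g is constant on each G_i,
   and \sum_{g in G_i} x_g (b_g - d_g) = X_i \sum_{g in G_i} (b_g - d_g)
   = X_i (W_i - V_i). *)

Lemma mean_mul_sum_const (F : numFieldType) (T : finType) (A : {set T})
    (a c : T -> F) :
  {in A &, forall g g', c g = c g'} ->
  #|A|%:R^-1 * (\sum_(g in A) a g) * \sum_(g in A) c g =
  \sum_(g in A) a g * c g.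
Proof.
move=> cA; have [->|[g0 Ag0]] := set_0Vmem A; first by rewrite !big_set0 !mulr0.
have cAg0 : {in A, forall g, c g = c g0} by move=> g Ag; apply: cA.
have A_neq0 : #|A|%:R != 0 :> F.
  by rewrite pnatr_eq0 -lt0n; apply/card_gt0P; exists g0.
rewrite (eq_bigr _ cAg0) sumr_const -[c g0 *+ _]mulr_natl mulrAC mulrA mulVf //.
by rewrite mul1r mulr_sumr; apply: eq_bigr => g Ag; rewrite mulrC (cAg0 g Ag).
Qed.

Section IndividualInvariance.
Variables (R : realFieldType) (G I : finType) (ind : G -> I) (p : rule R G).

Definition swap_parent (g g' h : G) (e : event G) : event G :=
  [ffun k => if k == h then omap (tperm g g') (e k) else e k].

Lemma swap_parentK g g' h : involutive (swap_parent g g' h).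
Proof.
move=> e; apply/ffunP => k; rewrite !ffunE.
by case: eqP => // ->; case: (e h) => //= a; rewrite tpermK.
Qed.

Lemma swap_parent_sim g g' h e :
  ind g = ind g' -> same_R_sim ind (swap_parent g g' h e) e.
Proof.
move=> gg'; apply/forallP => k; rewrite ffunE.
case: eqP => [->|_]; last by case: (e k).
case: (e h) => //= a; case: tpermP => [->|->|_]; by rewrite ?gg'.
Qed.

Lemma e_rate_ind x {g g'} h :
  assumption4 ind p -> ind g = ind g' -> e_rate p x g h = e_rate p x g' h.
Proof.
move=> fair gg'; rewrite /e_rate (reindex_inj (can_inj (swap_parentK g g' h))).
apply: eq_big => [e|e _]; last exact/fair/swap_parent_sim.
rewrite ffunE eqxx; case: (e h) => //= a.
by rewrite !(inj_eq Some_inj) -[X in _ == X](tpermR g g') (inj_eq perm_inj).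
Qed.

Lemma d_rateE x g : d_rate p x g = \sum_(e | in_R e g) p x e.
Proof.
rewrite /d_rate /e_rate; under eq_bigr => h _ do rewrite big_mkcond.
rewrite exchange_big [RHS]big_mkcond; apply: eq_bigr => e _ /=.
rewrite /in_R; case: (e g) => [a|] /=; last by rewrite big1.
rewrite (bigD1 a) //= eqxx big1 ?addr0 // => h /negPf ha.
by rewrite (inj_eq Some_inj) eq_sym ha.
Qed.

Hypothesis p_ge0 : forall x e, 0 <= p x e.

Lemma d_rate_ind x {g g'} :
  assumption3 ind p -> ind g = ind g' -> d_rate p x g = d_rate p x g'.
Proof.
move=> coherent gg'; rewrite !d_rateE big_mkcond [RHS]big_mkcond.
apply: eq_bigr => e _; have [pe_gt0|] := ltP 0 (p x e).
  by rewrite (coherent _ _ gg' x e pe_gt0).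
move=> pe_le0; have -> : p x e = 0 by apply/le_anti; rewrite pe_le0 p_ge0.
by rewrite !if_same.
Qed.

Lemma comp_events_fix (s : seq (event G)) h :
  (forall e, e \in s -> ~~ in_R e h) -> comp_events s h = h.
Proof.
elim: s => //= e s IHs sh; rewrite IHs => [|e' se']; last first.
  by apply: sh; rewrite inE se' orbT.
by move: (sh e (mem_head e s)); rewrite /in_R negbK /ext_map => /eqP ->.
Qed.

Lemma d_rate_gt0 x h : fixation_axiom p -> 0 < d_rate p x h.
Proof.
move=> [g [s [_ s_pos [e1 se1 e1g] s_const]]].
have [e se eh] : exists2 e, e \in s & in_R e h.
  have [->|hg] := eqVneq h g; first by exists e1.
  apply/exists_inP; apply: contraNT hg => /exists_inPn s_fix.
  by rewrite -(s_const h) comp_events_fix.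
rewrite d_rateE (bigD1 e) //= (lt_le_trans (s_pos e se x)) // lerDl.
exact: sumr_ge0.
Qed.

Variable v : G -> R.

Lemma bhat_ind x {g g'} :
  assumption4 ind p -> ind g = ind g' -> bhat p v x g = bhat p v x g'.
Proof.
by move=> fair gg'; apply: eq_bigr => h _; rewrite (e_rate_ind x h fair gg').
Qed.

Lemma reproductive_value_ind {g g'} :
  fixation_axiom p -> assumption3 ind p -> assumption4 ind p ->
  reproductive_values p v -> ind g = ind g' -> v g = v g'.
Proof.
move=> fixation coherent fair [vE _] gg'.
have d0_neq0 : d0 p g != 0 by rewrite gt_eqF ?d_rate_gt0.
apply: (mulfI d0_neq0); rewrite vE /d0 (d_rate_ind _ coherent gg') vE.
exact: bhat_ind fair gg'.
Qed.

Lemma selection_ind x {g g'} :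
  fixation_axiom p -> assumption3 ind p -> assumption4 ind p ->
  reproductive_values p v -> ind g = ind g' ->
  bhat p v x g - dhat p v x g = bhat p v x g' - dhat p v x g'.
Proof.
move=> fixation coherent fair rv gg'.
rewrite /dhat (bhat_ind x fair gg') (d_rate_ind x coherent gg').
by rewrite (reproductive_value_ind fixation coherent fair rv gg').
Qed.

End IndividualInvariance.

Lemma Wi_sub_Vi (R : realFieldType) (G I : finType) (ind : G -> I)
    (p : rule R G) (v : G -> R) x i :
  Wi ind p v x i - Vi ind v i =
  \sum_(g in Gi ind i) (bhat p v x g - dhat p v x g).
Proof.
rewrite -sumrB; apply: eq_bigr => g _.
by rewrite /fitness addrC addrA addKr addrC.
Qed.

Theorem proposition5 (R : realFieldType) (G I : finType) (ind : G -> I)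
    (p : rule R G) (v : G -> R) :
  (0 < #|G|)%N ->
  (forall i : I, exists g : G, ind g = i) ->
  is_replacement_rule p ->
  fixation_axiom p ->
  assumption1 p ->
  assumption3 ind p ->
  assumption4 ind p ->
  reproductive_values p v ->
  forall x : state G,
    Delta_sel p v x = \sum_(i : I) Xi R ind x i * (Wi ind p v x i - Vi ind v i).
Proof.
move=> _ _ [p_ge0 _] fixation _ coherent fair rv x.
rewrite /Delta_sel (partition_big ind predT) //=; apply: eq_bigr => i _.
rewrite Wi_sub_Vi /Xi mean_mul_sum_const; last first.
  move=> g g'; rewrite !inE => /eqP gi /eqP g'i.
  by apply: (@selection_ind _ _ _ ind p p_ge0) => //; rewrite gi g'i.
by apply: eq_bigl => g; rewrite inE.
Qed.
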